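(* For every tournament $T$, $\Delta(T)\le 2\,\mathrm{ctw}(T)$.
   Context: A tournament is a digraph with exactly one arc between each pair of distinct vertices. For an ordering $\sigma=\langle v_1,\dots,v_n\rangle$ of $V(T)$, an arc $(v_i,v_j)$ is backward if $j<i$; $d_\sigma(v)$ is the number of backward arcs incident to $v$, $\Delta_\sigma(T)=\max_v d_\sigma(v)$, and the degreewidth is $\Delta(T)=\min_\sigma\Delta_\sigma(T)$. For each prefix $\langle v_1,\dots,v_k\rangle$ ($k\in[n]$), its cut is the set of backward arcs with head in the prefix and tail outside it; the width of $\sigma$ is the maximum size of such a cut over all prefixes, and the cutwidth $\mathrm{ctw}(T)$ is the minimum width over all orderings of $V(T)$. *)

From mathcomp Require Import all_boot.
Set Implicit Arguments. Unset Strict Implicit. Unset Printing Implicit Defensive.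

Section Tournaments.
Variables (V : finType) (E : rel V).

(* E u v means there is an arc (u,v) with tail u and head v. *)
Definition is_tournament : Prop :=
  (forall v, ~~ E v v) /\
  (forall u v, u != v -> E u v = ~~ E v u).

(* An ordering <v_1,...,v_n> is encoded by the (bijective) position map
   s : V -> 'I_#|V|; s v is the index of v (0-based). *)
Definition ordering (s : {ffun V -> 'I_#|V|}) : bool := injectiveb s.

Definition bdeg (s : {ffun V -> 'I_#|V|}) (v : V) : nat :=
  #|[set u | (E u v && (s v < s u)) || (E v u && (s u < s v))]|.

Definition Delta_ord (s : {ffun V -> 'I_#|V|}) : nat := \max_(v : V) bdeg s v.

Definition cut (s : {ffun V -> 'I_#|V|}) (k : nat) : nat :=
  #|[set p : V * V | E p.1 p.2 && (s p.2 < k <= s p.1)]|.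

Definition width (s : {ffun V -> 'I_#|V|}) : nat :=
  \max_(k < #|V|) cut s k.+1.

Lemma ordering_exists : exists s, ordering s.
Proof.
exists [ffun v => enum_rank v]; apply/injectiveP => x y.
by rewrite !ffunE => /enum_rank_inj.
Qed.

Lemma degreewidth_ex :
  exists k, [exists s, ordering s && (Delta_ord s == k)].
Proof.
have [s hs] := ordering_exists.
by exists (Delta_ord s); apply/existsP; exists s; rewrite hs eqxx.
Qed.

Lemma cutwidth_ex :
  exists k, [exists s, ordering s && (width s == k)].
Proof.
have [s hs] := ordering_exists.
by exists (width s); apply/existsP; exists s; rewrite hs eqxx.
Qed.

Definition degreewidth : nat := ex_minn degreewidth_ex.
Definition cutwidth : nat := ex_minn cutwidth_ex.

End Tournaments.

(* A backward arc (u, v) with head v has its tail after v, so it lies in the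
   cut of the prefix ending at v; a backward arc (v, u) with tail v has its
   head before v, so it lies in the cut of the prefix ending just before v.
   Hence every vertex meets at most twice the width of the ordering in
   backward arcs, and an ordering of minimum width witnesses the bound.
   The argument never uses that the digraph is a tournament. *)

From mathcomp Require Import all_boot.

Section CutsAndDegrees.
Variables (V : finType) (E : rel V) (s : {ffun V -> 'I_#|V|}).

Lemma cut0 : cut E s 0 = 0.
Proof. by apply/eqP; rewrite cards_eq0; apply/eqP/setP => p; rewrite !inE ltn0 andbF. Qed.

Lemma cut_overflow k : #|V| < k -> cut E s k = 0.
Proof.
move=> ltVk; apply/eqP; rewrite cards_eq0; apply/eqP/setP => p; rewrite !inE.
apply/negbTE/negP => /andP[_ /andP[_ le_k_s1]].
by have := ltn_trans ltVk (leq_ltn_trans le_k_s1 (ltn_ord _)); rewrite ltnn.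
Qed.

Lemma cut_le_width k : cut E s k <= width E s.
Proof.
case: k => [|k]; first by rewrite cut0.
have [ltkV | leVk] := ltnP k #|V|.
  exact: (@leq_bigmax _ (fun i : 'I_#|V| => cut E s i.+1) (Ordinal ltkV)).
by rewrite cut_overflow.
Qed.

Lemma bdeg_le_cuts v : bdeg E s v <= cut E s (s v).+1 + cut E s (s v).
Proof.
rewrite /bdeg.
set In := [set u | E u v && (s v < s u)].
set Out := [set u | E v u && (s u < s v)].
have -> : [set u | (E u v && (s v < s u)) || (E v u && (s u < s v))] = In :|: Out.
  by apply/setP => u; rewrite !inE.
apply: leq_trans (leq_card_setU In Out) (leq_add _ _).
- rewrite -(@card_imset _ _ (fun u => (u, v)) In); last by move=> x y [].
  apply/subset_leq_card/subsetP => _ /imsetP[u + ->].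
  by rewrite !inE /= => /andP[-> ->]; rewrite ltnSn.
- rewrite -(@card_imset _ _ (fun u => (v, u)) Out); last by move=> x y [].
  apply/subset_leq_card/subsetP => _ /imsetP[u + ->].
  by rewrite !inE /= => /andP[-> ->]; rewrite leqnn.
Qed.

Lemma Delta_ord_le_width : Delta_ord E s <= 2 * width E s.
Proof.
apply/bigmax_leqP => v _; apply: leq_trans (bdeg_le_cuts v) _.
by rewrite mul2n -addnn leq_add ?cut_le_width.
Qed.

End CutsAndDegrees.

Theorem mainTheorem20 (V : finType) (E : rel V) :
  is_tournament E -> degreewidth E <= 2 * cutwidth E.
Proof.
move=> _.
rewrite /degreewidth; case: ex_minnP => d _ min_d.
rewrite /cutwidth; case: ex_minnP => m /existsP[s /andP[ord_s /eqP <-]] _.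
apply: leq_trans (min_d (Delta_ord E s) _) (Delta_ord_le_width _ E s).
by apply/existsP; exists s; rewrite ord_s eqxx.
Qed.
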